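(* Let $n\geq 4$, $1\leq d\leq n-1$, and $G\in\Omega_{n,d}$. Suppose $\{v_0,v_1,v_2\}\subseteq[n]$ is a set of three vertices such that the induced subdigraph $G[\{v_0,v_1,v_2\}]$ is a directed 3-cycle. Then there exists a useful neighbour or a useful arc for this 3-cycle.
   Context: $\Omega_{n,d}$ is the set of simple digraphs on $[n]$ in which every vertex has in-degree and out-degree $d$. For $U=\{v_0,v_1,v_2\}$ define the subsets of $V(G)\setminus U$: $\mathcal{W}^{(0,0)}=\{x: (x,u)\notin A(G),(u,x)\notin A(G)\ \forall u\in U\}$, $\mathcal{W}^{(0,1)}=\{x:(x,u)\notin A(G),(u,x)\in A(G)\ \forall u\in U\}$, $\mathcal{W}^{(1,0)}=\{x:(x,u)\in A(G),(u,x)\notin A(G)\ \forall u\in U\}$, $\mathcal{W}^{(1,1)}=\{x:(x,u)\in A(G),(u,x)\in A(G)\ \forall u\in U\}$. A vertex $x\in V(G)\setminus U$ is a useful neighbour for the 3-cycle if $x$ lies in none of the four sets $\mathcal{W}^{(i,j)}$. An ordered pair $(x,y)$ with $x\neq y$ is a useful arc for the 3-cycle if either (U1) $(x,y)\in A(G)$, $x\in\mathcal{W}^{(0,0)}\cup\mathcal{W}^{(0,1)}$ and $y\in\mathcal{W}^{(0,0)}\cup\mathcal{W}^{(1,0)}$; or (U2) $(x,y)\notin A(G)$, $x\in\mathcal{W}^{(1,0)}\cup\mathcal{W}^{(1,1)}$ and $y\in\mathcal{W}^{(0,1)}\cup\mathcal{W}^{(1,1)}$. *)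

From mathcomp Require Import all_boot.
Set Implicit Arguments. Unset Strict Implicit. Unset Printing Implicit Defensive.

(* A digraph on [n] = 'I_n is a relation e : rel 'I_n ; (x,y) is an arc iff e x y. *)

(* Simple digraph: no loops (antiparallel arcs are allowed, multiple arcs
   are impossible in a relation). *)
Definition simple_digraph (n : nat) (e : rel 'I_n) : Prop :=
  forall x, ~~ e x x.

Definition in_Omega (n d : nat) (e : rel 'I_n) : Prop :=
  simple_digraph e /\
  forall x : 'I_n, #|[set y | e x y]| = d /\ #|[set y | e y x]| = d.

Definition induced_dir_3cycle (n : nat) (e : rel 'I_n) (v0 v1 v2 : 'I_n) : Prop :=
  [/\ v0 != v1, v1 != v2, v0 != v2,
      [&& e v0 v1, e v1 v2 & e v2 v0] &
      [&& ~~ e v1 v0, ~~ e v2 v1 & ~~ e v0 v2]].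


Definition W (n : nat) (e : rel 'I_n) (U : {set 'I_n}) (i j : bool) : {set 'I_n} :=
  [set x | (x \notin U) && [forall u in U, (e x u == i) && (e u x == j)]].

Definition useful_neighbour (n : nat) (e : rel 'I_n) (U : {set 'I_n}) (x : 'I_n) : bool :=
  [&& x \notin U, x \notin W e U false false, x \notin W e U false true,
      x \notin W e U true false & x \notin W e U true true].

Definition useful_arc (n : nat) (e : rel 'I_n) (U : {set 'I_n}) (x y : 'I_n) : bool :=
  (x != y) &&
  ([&& e x y, (x \in W e U false false) || (x \in W e U false true)
            & (y \in W e U false false) || (y \in W e U true false)]
   || [&& ~~ e x y, (x \in W e U true false) || (x \in W e U true true)
            & (y \in W e U false true) || (y \in W e U true true)]).

From mathcomp Require Import all_boot zify.
Set Implicit Arguments. Unset Strict Implicit. Unset Printing Implicit Defensive.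

(* If no vertex outside U = {v0,v1,v2} is a useful neighbour, every such vertex
   is joined uniformly to U, so its relation to U is read off from v0.
   For d = 1 the only neighbours of v0 are v1 and v2, so every outside vertex
   lies in W^(0,0); an outside vertex (n >= 4) and its out-neighbour then form
   a useful arc of type (U1).  For d >= 2, v0 has an in-neighbour z outside U,
   hence z -> U; v0 has d - 1 out-neighbours outside U, all in W^(.,1).  If z
   dominated all of them except possibly itself, z would have out-degree at
   least 3 + (d - 2) > d, so some non-arc z -/-> w is a useful arc of type (U2). *)

Section UsefulCriteria.

Variables (n : nat) (e : rel 'I_n) (U : {set 'I_n}).

Lemma W_arcs i j x u : x \in W e U i j -> u \in U -> e x u = i /\ e u x = j.
Proof.
rewrite inE => /andP [_ /forallP /(_ u)] + uU.
by rewrite uU => /andP [/eqP -> /eqP ->].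
Qed.

Lemma W_of_not_useful_neighbour u x :
  u \in U -> x \notin U -> ~~ useful_neighbour e U x -> x \in W e U (e x u) (e u x).
Proof.
rewrite /useful_neighbour => uU xU; rewrite xU /= !negb_and !negbK.
by case/or4P => xW; have [-> ->] := W_arcs xW uU.
Qed.

Lemma useful_arc_forward j k x y :
  x != y -> e x y -> x \in W e U false j -> y \in W e U k false -> useful_arc e U x y.
Proof.
rewrite /useful_arc => -> -> /=.
by case: j; case: k => -> ->; rewrite ?orbT.
Qed.

Lemma useful_arc_backward j k x y :
  x != y -> ~~ e x y -> x \in W e U true j -> y \in W e U k true -> useful_arc e U x y.
Proof.
rewrite /useful_arc => -> /negbTE -> /=.
by case: j; case: k => -> ->; rewrite ?orbT.
Qed.

End UsefulCriteria.

Section DirectedTriangle.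

Variables (n : nat) (e : rel 'I_n) (v0 v1 v2 : 'I_n).
Hypothesis e_irrefl : simple_digraph e.
Hypothesis triangle : induced_dir_3cycle e v0 v1 v2.

Local Notation U := [set v0; v1; v2].
Hypothesis no_useful_neighbour : forall x, ~~ useful_neighbour e U x.

Let v0U : v0 \in U. Proof. by rewrite !inE eqxx. Qed.

Lemma card_triangle : #|U| = 3.
Proof.
case: triangle => n01 n12 n02 _ _.
by rewrite -setUA cardsU1 cardsU1 cards1 !inE (negbTE n01) (negbTE n02) (negbTE n12).
Qed.

Lemma outside_uniform x : x \notin U -> x \in W e U (e x v0) (e v0 x).
Proof. by move=> xU; apply: W_of_not_useful_neighbour. Qed.

Lemma out_v0_notin x : e v0 x -> x != v1 -> x \notin U.
Proof.
case: triangle => _ _ _ _ /and3P [_ _ nv02] ev0x xv1.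
rewrite !inE !negb_or xv1 andbT; apply/andP; split; apply: contraTneq ev0x => ->.
  exact: e_irrefl.
exact: nv02.
Qed.

Lemma in_v0_notin x : e x v0 -> x != v2 -> x \notin U.
Proof.
case: triangle => _ _ _ _ /and3P [nv10 _ _] exv0 xv2.
rewrite !inE !negb_or xv2 andbT; apply/andP; split; apply: contraTneq exv0 => ->.
  exact: e_irrefl.
exact: nv10.
Qed.

Lemma outside_W00_degree1 x : in_Omega 1 e -> x \notin U -> x \in W e U false false.
Proof.
move=> [_ /(_ v0) [out1 in1]] xU.
have [e01 _ e20] : [/\ e v0 v1, e v1 v2 & e v2 v0].
  by case: triangle => _ _ _ /and3P [].
have nev0x : ~~ e v0 x.
  apply: contra xU => ev0x; have /card_le1_eqP eq1 := eq_leq out1.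
  by rewrite -(eq1 x v1) ?inE ?eqxx ?orbT.
have nexv0 : ~~ e x v0.
  apply: contra xU => exv0; have /card_le1_eqP eq1 := eq_leq in1.
  by rewrite -(eq1 x v2) ?inE ?eqxx ?orbT.
by have := outside_uniform xU; rewrite (negbTE nev0x) (negbTE nexv0).
Qed.

Lemma useful_arc_degree1 :
  4 <= n -> in_Omega 1 e -> exists x y, useful_arc e U x y.
Proof.
move=> n_ge4 Omega1.
have /card_gt0P [x] : 0 < #|~: U|.
  have := cardsC U; rewrite card_triangle card_ord => cardUC.
  by rewrite -(ltn_add2l 3) addn0 cardUC.
rewrite inE => xU.
have [_ /(_ x) [/eqP/cards1P [y outx] _]] := Omega1.
have exy : e x y by have := set11 y; rewrite -outx inE.
have xW := outside_W00_degree1 Omega1 xU.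
have yU : y \notin U.
  by apply/negP => yU; have [] := W_arcs xW yU; rewrite exy.
have xy : x != y by apply: contraTneq exy => ->; apply: e_irrefl.
by exists x, y; apply: useful_arc_forward xy exy xW (outside_W00_degree1 Omega1 yU).
Qed.

Lemma useful_arc_degree_ge2 d :
  2 <= d -> in_Omega d e -> exists x y, useful_arc e U x y.
Proof.
move=> d_ge2 [_ deg].
have [e01 _ e20] : [/\ e v0 v1, e v1 v2 & e v2 v0].
  by case: triangle => _ _ _ /and3P [].
have [out_v0 in_v0] := deg v0.
have /card_gt0P [z /setD1P [zv2]] : 0 < #|[set y | e y v0] :\ v2|.
  by move: in_v0; rewrite (cardsD1 v2) inE e20; lia.
rewrite inE => ezv0.
have zU := in_v0_notin ezv0 zv2.
have zW := outside_uniform zU; rewrite ezv0 in zW.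
set S := [set y | e v0 y] :\ v1.
have cardS : #|S| + 1 = d by rewrite -out_v0 (cardsD1 v1 [set y | e v0 y]) inE e01 addnC.
have S_notin w : w \in S -> w \notin U.
  by case/setD1P => wv1; rewrite inE => /out_v0_notin; apply.
have disj : [disjoint S :\ z & U].
  by rewrite disjoint_subset; apply/subsetP => w /setD1P [_ /S_notin].
have /subsetPn [w] : ~~ (U :|: S :\ z \subset [set y | e z y]).
  have cardUS : #|U :|: S :\ z| = 3 + #|S :\ z|.
    by apply/eqP; rewrite -card_triangle (leq_card_setU _ _).2 disjoint_sym.
  apply/negP => /subset_leq_card; rewrite cardUS (proj1 (deg z)).
  by have := cardsD1 z S; lia.
move=> /setUP [wU | /setD1P [wz wS]]; rewrite inE => nezw.
  by have [] := W_arcs zW wU; move: nezw => /negbTE ->.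
have wW := outside_uniform (S_notin w wS).
move: wS => /setD1P [_]; rewrite inE => ev0w; rewrite ev0w in wW.
by exists z, w; apply: useful_arc_backward nezw zW wW; rewrite eq_sym.
Qed.

End DirectedTriangle.

Theorem mainTheorem6 (n d : nat) (e : rel 'I_n) (v0 v1 v2 : 'I_n) :
  4 <= n -> 1 <= d <= n.-1 -> in_Omega d e ->
  induced_dir_3cycle e v0 v1 v2 ->
  (exists x, useful_neighbour e [set v0; v1; v2] x) \/
  (exists x y, useful_arc e [set v0; v1; v2] x y).
Proof.
move=> n_ge4 /andP [d_ge1 _] Omega triangle; set U := [set v0; v1; v2].
have [/existsP [x nbx] | /existsPn no_nb] := boolP [exists x, useful_neighbour e U x].
  by left; exists x.
right; have e_irrefl := proj1 Omega.
case: d d_ge1 Omega => [// | [_ Omega1 | d _ Omega]].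
  exact: useful_arc_degree1 e_irrefl triangle no_nb n_ge4 Omega1.
by apply: (useful_arc_degree_ge2 e_irrefl triangle no_nb _ Omega).
Qed.
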